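(* Let $f$ be a rotational wave with speed $c$ satisfying $c^2>1$. Then there exists $\lambda_*\in\sigma(\mathrm{P})$ with $\operatorname{Re}\lambda_*>0$.
   Context: A traveling wave of speed $c$ ($c^2\neq1$) of $u_{tt}-u_{xx}+\sin u=0$ is a real solution $f$ of $(c^2-1)f''+\sin f=0$, with energy $E$ given by $\tfrac12(c^2-1)(f')^2+1-\cos f=E$; when $c^2>1$ it is rotational if $E>2$. Let $\gamma=1/(c^2-1)$. $\sigma(\mathrm{P})$ is the set of $\lambda\in\mathbb{C}$ for which $p''-2c\gamma\lambda p'+\gamma(\lambda^2+\cos f(z))p=0$ has a nontrivial solution bounded on $\mathbb{R}$. *)

From Stdlib Require Import Reals.
From Coquelicot Require Import Coquelicot.
Open Scope R_scope.

(* f is a (real, C^2) traveling wave of speed c of u_tt - u_xx + sin u = 0: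
   (c^2-1) f'' + sin f = 0 on all of R. *)
Definition traveling_wave (c : R) (f : R -> R) : Prop :=
  (forall z, ex_derive f z) /\ (forall z, ex_derive (Derive f) z) /\
  (forall z, (c ^ 2 - 1) * Derive_n f 2 z + sin (f z) = 0).

Definition wave_energy (c : R) (f : R -> R) (E : R) : Prop :=
  forall z, / 2 * (c ^ 2 - 1) * (Derive f z) ^ 2 + 1 - cos (f z) = E.

Definition rotational_wave (c : R) (f : R -> R) : Prop :=
  traveling_wave c f /\ exists E, wave_energy c f E /\ 2 < E.

Definition gamma (c : R) : R := / (c ^ 2 - 1).

Definition in_sigma_P (c : R) (f : R -> R) (lam : C) : Prop :=
  exists (p dp ddp : R -> C),
    (forall z, is_derive p z (dp z)) /\
    (forall z, is_derive dp z (ddp z)) /\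
    (forall z, (ddp z - 2 * RtoC c * RtoC (gamma c) * lam * dp z
                + RtoC (gamma c) * (lam * lam + RtoC (cos (f z))) * p z)%C = 0%C) /\
    (exists M : R, forall z, Cmod (p z) <= M) /\
    (exists z, p z <> 0%C).

From Stdlib Require Import Reals Lra.
From Coquelicot Require Import Coquelicot.
Open Scope R_scope.

(* Write g = gamma c and A = E - 1 > 1, so that f'^2 = 2 g (A + cos f) and f' has a constant
   sign.  For a parameter a in the upper half-plane choose lam, kap with
   2 g lam^2 = a - A and kap^2 = g^2 lam^2 (a^2 - 1).  Then, with Psi = a + cos f,
   phi = c g lam + (kap + Psi'/2) / Psi solves the Riccati equation
   phi' + phi^2 - 2 c g lam phi + g (lam^2 + cos f) = 0, so p = exp (int phi) solves the
   eigenvalue equation.  Substituting u = f(z), int phi = log Psi / 2 + int q(u) du / f', where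
   q(u) = c g lam + kap / (a + cos u); hence p is bounded as soon as Re (q / |f'|) has zero mean
   over a period.  Along the segment from i/|c| to M = A + 1 + 2g this mean is negative at the
   start (pair u with u + pi) and positive at the end, so it vanishes somewhere in between, and
   there Re lam > 0 because lam is the principal root of a number with positive imaginary part. *)

Lemma continuous_Rplus (f g : R -> R) x :
  continuous f x -> continuous g x -> continuous (fun t => f t + g t) x.
Proof. intros; apply (@continuous_plus R_UniformSpace R_AbsRing R_NormedModule); auto. Qed.

Lemma continuous_Rminus (f g : R -> R) x :
  continuous f x -> continuous g x -> continuous (fun t => f t - g t) x.
Proof. intros; apply (@continuous_minus R_UniformSpace R_AbsRing R_NormedModule); auto. Qed.

Lemma continuous_Rmult (f g : R -> R) x :
  continuous f x -> continuous g x -> continuous (fun t => f t * g t) x.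
Proof. intros; apply (@continuous_mult R_UniformSpace R_AbsRing); auto. Qed.

Lemma continuous_of_ex_derive (f : R -> R) x : ex_derive f x -> continuous f x.
Proof. intros H; apply (ex_derive_continuous (K := R_AbsRing) (V := R_NormedModule)), H. Qed.

Lemma ex_RInt_continuous_R (f : R -> R) a b : (forall x, continuous f x) -> ex_RInt f a b.
Proof. intros H; apply (ex_RInt_continuous (V := R_CompleteNormedModule)); auto. Qed.

Lemma RInt_Chasles_R (f : R -> R) a b c : (forall x, continuous f x) ->
  RInt f a b + RInt f b c = RInt f a c.
Proof. intros H; apply (RInt_Chasles (V := R_CompleteNormedModule)); apply ex_RInt_continuous_R; auto. Qed.

Lemma RInt_shift (f : R -> R) a b s : (forall x, continuous f x) ->
  RInt (fun x => f (x + s)) a b = RInt f (a + s) (b + s).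
Proof.
  intros H.
  rewrite <- (Rmult_1_l a) at 2. rewrite <- (Rmult_1_l b) at 2.
  rewrite <- (RInt_comp_lin (V := R_CompleteNormedModule) f 1 s a b)
    by (apply ex_RInt_continuous_R; auto).
  apply RInt_ext; intros x _. cbn. unfold mult; cbn. rewrite !Rmult_1_l. reflexivity.
Qed.

Section Periodic.

Variables (f : R -> R) (T : R).
Hypothesis f_cont : forall x, continuous f x.
Hypothesis f_periodic : forall x, f (x + T) = f x.

Lemma RInt_period_shift x : RInt f x (x + T) = RInt f 0 T.
Proof.
  assert (Hshift : RInt f T (x + T) = RInt f 0 x).
  { replace T with (0 + T) at 1 by ring. rewrite <- RInt_shift by auto.
    apply RInt_ext; intros; apply f_periodic. }
  pose proof (RInt_Chasles_R f x T (x + T) f_cont) as E1.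
  pose proof (RInt_Chasles_R f x 0 T f_cont) as E2.
  pose proof (RInt_Chasles_R f x 0 x f_cont) as E3.
  rewrite RInt_point in E3. unfold zero in E3; simpl in E3. lra.
Qed.

Lemma RInt_period_translate s :
  RInt (fun x => f (x + s)) 0 T = RInt f 0 T.
Proof.
  rewrite RInt_shift by auto. rewrite Rplus_0_l, Rplus_comm. apply RInt_period_shift.
Qed.

Lemma periodic_iter x n : f (x + INR n * T) = f x.
Proof.
  induction n as [|n IH].
  - rewrite Rmult_0_l, Rplus_0_r. reflexivity.
  - rewrite S_INR, <- IH, <- (f_periodic (x + INR n * T)). f_equal. ring.
Qed.

Lemma periodic_bounded : 0 < T -> exists B, forall x, Rabs (f x) <= B.
Proof.
  intros HT.
  assert (Hpt : forall x, continuity_pt f x) by (intros; apply continuity_pt_filterlim, f_cont).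
  destruct (continuity_ab_maj f 0 T) as [xM [HM _]]; [lra | intros; apply Hpt |].
  destruct (continuity_ab_min f 0 T) as [xm [Hm _]]; [lra | intros; apply Hpt |].
  exists (Rmax (f xM) (- f xm)).
  assert (Hbase : forall y, 0 <= y <= T -> Rabs (f y) <= Rmax (f xM) (- f xm)).
  { intros y Hy. specialize (HM y Hy). specialize (Hm y Hy).
    pose proof (Rmax_l (f xM) (- f xm)). pose proof (Rmax_r (f xM) (- f xm)).
    apply Rabs_le; lra. }
  intros x. destruct (Rle_lt_dec 0 x) as [Hx | Hx].
  - destruct (nfloor_ex (x / T)) as [n [Hn1 Hn2]]; [apply Rdiv_le_0_compat; lra |].
    replace x with ((x - INR n * T) + INR n * T) by ring. rewrite periodic_iter.
    apply Hbase. apply (Rmult_le_compat_r T) in Hn1; [| lra].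
    apply (Rmult_lt_compat_r T) in Hn2; [| lra].
    replace (x / T * T) with x in * by (field; lra). lra.
  - destruct (nfloor_ex (- x / T)) as [n [Hn1 Hn2]]; [apply Rdiv_le_0_compat; lra |].
    rewrite <- (periodic_iter x (S n)). apply Hbase. rewrite S_INR.
    apply (Rmult_le_compat_r T) in Hn1; [| lra].
    apply (Rmult_lt_compat_r T) in Hn2; [| lra].
    replace (- x / T * T) with (- x) in * by (field; lra). lra.
Qed.

End Periodic.

Lemma continuity_2d_pt_continuous_l (F : R -> R -> R) u t :
  continuity_2d_pt F u t -> continuous (fun x => F x t) u.
Proof.
  intros H. apply continuity_pt_filterlim. intros eps Heps.
  destruct (H (mkposreal eps Heps)) as [d Hd].
  exists d; split; [apply cond_pos |]. intros x [_ Hx]. cbn in *.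
  apply Hd; [exact Hx |]. rewrite Rminus_eq_0, Rabs_R0. apply cond_pos.
Qed.

Lemma continuity_RInt_param (F : R -> R -> R) a b t0 : a < b ->
  (forall u t, continuity_2d_pt F u t) ->
  continuity_pt (fun t => RInt (fun u => F u t) a b) t0.
Proof.
  intros Hab HF eps Heps.
  set (e := eps / (2 * (b - a))).
  assert (He : 0 < e) by (apply Rdiv_lt_0_compat; lra).
  destruct (uniform_continuity_2d_1d F a b t0 (fun x _ => HF x t0) (mkposreal e He))
    as [d Hd].
  assert (Hex : forall t, ex_RInt (fun u => F u t) a b).
  { intros t. apply ex_RInt_continuous_R. intros; apply continuity_2d_pt_continuous_l, HF. }
  exists d; split; [apply cond_pos |].
  intros t [_ Ht]. unfold R_dist in *; simpl in *. unfold Rdist in *.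
  pose proof (RInt_minus (V := R_CompleteNormedModule) _ _ a b (Hex t) (Hex t0)) as E.
  unfold minus, plus, opp in E; simpl in E. unfold Rminus at 1. rewrite <- E.
  apply Rle_lt_trans with ((b - a) * e).
  - apply abs_RInt_le_const; [lra | apply (ex_RInt_minus (V := R_CompleteNormedModule)); auto |].
    intros u Hu. apply Rlt_le. pose proof (cond_pos d).
    pose proof (Rle_abs (t - t0)). pose proof (Rle_abs (- (t - t0))). rewrite Rabs_Ropp in *.
    apply (Hd u t0 u t); try lra.
    + rewrite Rminus_eq_0, Rabs_R0. apply cond_pos.
  - unfold e. field_simplify; lra.
Qed.

Lemma continuous_nonvanishing_sign (h : R -> R) :
  (forall z, continuous h z) -> (forall z, h z <> 0) ->
  (forall z, 0 < h z) \/ (forall z, h z < 0).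
Proof.
  intros Hc Hn.
  assert (Hpt : forall z, continuity_pt h z) by (intros; apply continuity_pt_filterlim, Hc).
  assert (Hpt' : forall z, continuity_pt (fun x => - h x) z).
  { intros z. apply continuity_pt_filterlim, (continuous_opp (V := R_NormedModule)), Hc. }
  assert (Hcross : forall x y, x < y -> h x < 0 -> 0 < h y -> False).
  { intros x y Hxy Hx Hy. destruct (Ranalysis5.IVT_interv h x y) as [w [_ Hw]]; auto.
    exact (Hn w Hw). }
  assert (Hcross' : forall x y, x < y -> 0 < h x -> h y < 0 -> False).
  { intros x y Hxy Hx Hy.
    destruct (Ranalysis5.IVT_interv (fun x => - h x) x y) as [w [_ Hw]]; auto; try lra.
    apply (Hn w); lra. }
  assert (H0 := Hn 0).
  destruct (Rlt_le_dec 0 (h 0)) as [Hpos | Hneg]; [left | right]; intros z;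
    assert (Hz := Hn z); destruct (Rtotal_order z 0) as [Hlt | [-> | Hgt]]; try lra;
    destruct (Rlt_le_dec 0 (h z)); try lra; exfalso.
  - apply (Hcross z 0); lra.
  - apply (Hcross' 0 z); lra.
  - apply (Hcross' z 0); lra.
  - apply (Hcross 0 z); lra.
Qed.

(** * The principal complex square root *)

(* It squares back to [w] only when [Im w >= 0]; below the real axis it yields the conjugate
   of a square root. *)
Definition Csqrt (w : C) : C :=
  (sqrt ((Cmod w + Re w) / 2), sqrt ((Cmod w - Re w) / 2)).

Lemma Cmod_sqr (w : C) : Cmod w * Cmod w = Re w * Re w + Im w * Im w.
Proof. pose proof (Cmod2_alt w) as H. simpl in H. lra. Qed.

Lemma Rabs_Re_lt_Cmod (w : C) : Im w <> 0 -> Rabs (Re w) < Cmod w.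
Proof.
  intros Hw. apply Rsqr_incrst_0; [| apply Rabs_pos | apply Cmod_ge_0].
  rewrite <- Rsqr_abs. unfold Rsqr. rewrite Cmod_sqr.
  assert (0 < Im w * Im w) by (apply Rsqr_pos_lt, Hw). lra.
Qed.

Lemma Csqrt_sqr (w : C) : 0 <= Im w -> (Csqrt w * Csqrt w)%C = w.
Proof.
  intros Hw. pose proof (re_le_Cmod w) as Hre. pose proof (Cmod_sqr w) as Hmod.
  pose proof (Rle_abs (Re w)). pose proof (Rle_abs (- Re w)). rewrite Rabs_Ropp in *.
  destruct w as [x y]. unfold Csqrt, Cmult. cbn [Re Im fst snd] in *.
  set (r := Cmod (x, y)) in *.
  rewrite !sqrt_sqrt by lra. f_equal; [lra |].
  rewrite Rmult_comm, <- sqrt_mult by lra.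
  replace ((r - x) / 2 * ((r + x) / 2)) with ((y / 2) * (y / 2)) by nra.
  rewrite sqrt_square by lra. lra.
Qed.

Lemma Re_Csqrt_pos (w : C) : 0 < Im w -> 0 < Re (Csqrt w).
Proof.
  intros Hw. pose proof (Rabs_Re_lt_Cmod w (Rgt_not_eq _ _ Hw)).
  pose proof (Rle_abs (- Re w)). rewrite Rabs_Ropp in *.
  apply sqrt_lt_R0. lra.
Qed.

Lemma Im_Csqrt_pos (w : C) : 0 < Im w -> 0 < Im (Csqrt w).
Proof.
  intros Hw. pose proof (Rabs_Re_lt_Cmod w (Rgt_not_eq _ _ Hw)).
  pose proof (Rle_abs (Re w)). apply sqrt_lt_R0. lra.
Qed.

Lemma Csqrt_RtoC x : 0 <= x -> Csqrt (RtoC x) = RtoC (sqrt x).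
Proof.
  intros Hx. unfold Csqrt. rewrite Cmod_R, Rabs_pos_eq by exact Hx. cbn.
  replace ((x + x) / 2) with x by field. replace ((x - x) / 2) with 0 by field.
  rewrite sqrt_0. reflexivity.
Qed.

Lemma Re_plus_RtoC (a : C) x : Re (a + RtoC x)%C = Re a + x.
Proof. reflexivity. Qed.

Lemma Im_plus_RtoC (a : C) x : Im (a + RtoC x)%C = Im a.
Proof. destruct a. apply Rplus_0_r. Qed.

Definition Ccontinuous (h : R -> C) (t : R) : Prop :=
  continuous (fun s => Re (h s)) t /\ continuous (fun s => Im (h s)) t.

Lemma Ccontinuous_const (k : C) t : Ccontinuous (fun _ => k) t.
Proof. split; apply continuous_const. Qed.

Lemma Ccontinuous_plus (h k : R -> C) t :
  Ccontinuous h t -> Ccontinuous k t -> Ccontinuous (fun s => (h s + k s)%C) t.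
Proof. intros [] []; split; apply continuous_Rplus; auto. Qed.

Lemma Ccontinuous_minus (h k : R -> C) t :
  Ccontinuous h t -> Ccontinuous k t -> Ccontinuous (fun s => (h s - k s)%C) t.
Proof. intros [] []; split; apply continuous_Rminus; auto. Qed.

Lemma Ccontinuous_mult (h k : R -> C) t :
  Ccontinuous h t -> Ccontinuous k t -> Ccontinuous (fun s => (h s * k s)%C) t.
Proof.
  intros [] []; split; cbn.
  - apply continuous_Rminus; apply continuous_Rmult; auto.
  - apply continuous_Rplus; apply continuous_Rmult; auto.
Qed.

Lemma Ccontinuous_Csqrt (h : R -> C) t :
  Ccontinuous h t -> Ccontinuous (fun s => Csqrt (h s)) t.
Proof.
  intros [Hr Hi].
  assert (Hmod : continuous (fun s => Cmod (h s)) t).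
  { unfold Cmod. apply continuous_sqrt_comp.
    apply continuous_Rplus; cbn; apply continuous_Rmult; auto using continuous_Rmult, continuous_const. }
  split; apply continuous_sqrt_comp; unfold Rdiv; apply continuous_Rmult;
    auto using continuous_Rplus, continuous_Rminus, continuous_const.
Qed.

Lemma is_derive_Rvalue (f : R -> R) (x l l' : R) :
  is_derive f x l -> l = l' -> is_derive f x l'.
Proof. intros H <-; exact H. Qed.

Lemma is_derive_Cvalue (f : R -> C) (x : R) (l l' : C) :
  is_derive f x l -> l = l' -> is_derive f x l'.
Proof. intros H <-; exact H. Qed.

Lemma is_derive_Rplus (f g : R -> R) x df dg :
  is_derive f x df -> is_derive g x dg -> is_derive (fun t => f t + g t) x (df + dg).
Proof. intros Hf Hg. apply (is_derive_plus f g x df dg Hf Hg). Qed.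

Lemma is_derive_Rminus (f g : R -> R) x df dg :
  is_derive f x df -> is_derive g x dg -> is_derive (fun t => f t - g t) x (df - dg).
Proof. intros Hf Hg. apply (is_derive_minus f g x df dg Hf Hg). Qed.

Lemma is_derive_Rmult (f g : R -> R) x df dg :
  is_derive f x df -> is_derive g x dg ->
  is_derive (fun t => f t * g t) x (df * g x + f x * dg).
Proof. intros Hf Hg. apply (is_derive_mult f g x df dg Hf Hg). intros; apply Rmult_comm. Qed.

Lemma is_derive_Rdiv (f g : R -> R) x df dg :
  is_derive f x df -> is_derive g x dg -> g x <> 0 ->
  is_derive (fun t => f t / g t) x ((df * g x - f x * dg) / (g x * g x)).
Proof.
  intros Hf Hg Hn. eapply is_derive_Rvalue.
  - apply is_derive_Rmult; [exact Hf | apply is_derive_inv; eauto].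
  - cbn. field. exact Hn.
Qed.

Lemma is_derive_Cpair (u v : R -> R) z du dv :
  is_derive u z du -> is_derive v z dv ->
  is_derive (fun x => (u x, v x) : C) z ((du, dv) : C).
Proof.
  intros Hu Hv. unfold is_derive in *.
  apply (filterdiff_comp_2 u v (fun x y => ((x, y) : C_R_NormedModule))
    (fun y => scal y du) (fun y => scal y dv) (fun x y => ((x, y) : C_R_NormedModule)))
    in Hv; [exact Hv | exact Hu |].
  apply filterdiff_linear, is_linear_ext with (fun t => t); [intros [x y]; reflexivity |].
  apply is_linear_id.
Qed.

Lemma is_derive_Re (f : R -> C) z l :
  is_derive f z l -> is_derive (fun x => Re (f x)) z (Re l).
Proof.
  intros H. apply (filterdiff_comp f (@fst R R) _ (@fst R R)) in H; [exact H |].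
  apply filterdiff_linear, (@is_linear_fst R_AbsRing R_NormedModule R_NormedModule).
Qed.

Lemma is_derive_Im (f : R -> C) z l :
  is_derive f z l -> is_derive (fun x => Im (f x)) z (Im l).
Proof.
  intros H. apply (filterdiff_comp f (@snd R R) _ (@snd R R)) in H; [exact H |].
  apply filterdiff_linear, (@is_linear_snd R_AbsRing R_NormedModule R_NormedModule).
Qed.

Lemma is_derive_C_parts (f : R -> C) z l :
  is_derive (fun x => Re (f x)) z (Re l) -> is_derive (fun x => Im (f x)) z (Im l) ->
  is_derive f z l.
Proof.
  intros Hr Hi. destruct l as [lr li].
  apply (is_derive_ext (fun x => (Re (f x), Im (f x)) : C));
    [intros t; destruct (f t); reflexivity | apply is_derive_Cpair; assumption].
Qed.

Lemma is_derive_RtoC (u : R -> R) x du :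
  is_derive u x du -> is_derive (fun t => RtoC (u t)) x (RtoC du).
Proof. intros H. apply is_derive_C_parts; [exact H | exact (is_derive_const 0 x)]. Qed.

Lemma is_derive_Cconst (k : C) (x : R) : is_derive (fun _ : R => k) x (RtoC 0).
Proof. apply is_derive_C_parts; exact (is_derive_const _ x). Qed.

Lemma is_derive_Cplus (f g : R -> C) x df dg :
  is_derive f x df -> is_derive g x dg -> is_derive (fun t => (f t + g t)%C) x (df + dg)%C.
Proof.
  intros Hf Hg. apply is_derive_C_parts; apply is_derive_Rplus;
    auto using is_derive_Re, is_derive_Im.
Qed.

Lemma is_derive_Cmult (f g : R -> C) x df dg :
  is_derive f x df -> is_derive g x dg ->
  is_derive (fun t => (f t * g t)%C) x (df * g x + f x * dg)%C.
Proof.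
  intros Hf Hg.
  pose proof (is_derive_Re _ _ _ Hf). pose proof (is_derive_Im _ _ _ Hf).
  pose proof (is_derive_Re _ _ _ Hg). pose proof (is_derive_Im _ _ _ Hg).
  apply is_derive_C_parts; eapply is_derive_Rvalue.
  - apply (is_derive_Rminus (fun t => Re (f t) * Re (g t)) (fun t => Im (f t) * Im (g t)));
      apply is_derive_Rmult; eassumption.
  - destruct df, dg, (f x), (g x); cbn. ring.
  - apply (is_derive_Rplus (fun t => Re (f t) * Im (g t)) (fun t => Im (f t) * Re (g t)));
      apply is_derive_Rmult; eassumption.
  - destruct df, dg, (f x), (g x); cbn. ring.
Qed.

Lemma is_derive_Cinv (f : R -> C) x df :
  is_derive f x df -> f x <> 0%C ->
  is_derive (fun t => (/ f t)%C) x (- df / (f x * f x))%C.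
Proof.
  intros Hf Hn.
  assert (Hd : Re (f x) ^ 2 + Im (f x) ^ 2 <> 0).
  { intro E. apply Hn. destruct (f x) as [p q]; cbn in *.
    assert (p = 0) by nra. assert (q = 0) by nra. subst; reflexivity. }
  assert (Hden : is_derive (fun t => Re (f t) ^ 2 + Im (f t) ^ 2) x
                   (2 * Re (f x) * Re df + 2 * Im (f x) * Im df)).
  { eapply is_derive_Rvalue.
    - apply is_derive_Rplus; apply is_derive_pow; [apply is_derive_Re | apply is_derive_Im]; exact Hf.
    - cbn. ring. }
  assert (Hsq : forall p q : R, p * p + q * q <> 0 ->
            (p * p - q * q) * (p * p - q * q) + (p * q + q * p) * (p * q + q * p) <> 0).
  { intros p q H. replace (_ + _) with ((p * p + q * q) * (p * p + q * q)) by ring.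
    now apply Rmult_integral_contrapositive. }
  apply is_derive_C_parts; unfold Cinv; cbn;
    (eapply is_derive_Rvalue; [apply is_derive_Rdiv; [| exact Hden | exact Hd] |]).
  - apply is_derive_Re, Hf.
  - destruct df as [d1 d2], (f x) as [p q]; cbn in *. field.
    repeat split; [apply Hsq |]; lra.
  - apply (is_derive_opp (fun t => Im (f t))), is_derive_Im, Hf.
  - destruct df as [d1 d2], (f x) as [p q]; cbn in *. unfold opp; cbn. field.
    repeat split; [apply Hsq |]; lra.
Qed.

Definition Cexp (w : C) : C := (exp (Re w) * cos (Im w), exp (Re w) * sin (Im w)).

Lemma Cmod_Cexp (w : C) : Cmod (Cexp w) = exp (Re w).
Proof.
  unfold Cmod, Cexp. cbn. pose proof (sin2_cos2 (Im w)) as H. unfold Rsqr in H.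
  replace (exp (Re w) * cos (Im w) * (exp (Re w) * cos (Im w) * 1) +
           exp (Re w) * sin (Im w) * (exp (Re w) * sin (Im w) * 1))
    with (exp (Re w) * exp (Re w) * (sin (Im w) * sin (Im w) + cos (Im w) * cos (Im w)))
    by ring.
  rewrite H, Rmult_1_r. apply sqrt_square, Rlt_le, exp_pos.
Qed.

Lemma is_derive_Cexp (P : R -> C) x dP :
  is_derive P x dP -> is_derive (fun t => Cexp (P t)) x (dP * Cexp (P x))%C.
Proof.
  intros H. pose proof (is_derive_Re _ _ _ H) as Hr. pose proof (is_derive_Im _ _ _ H) as Hi.
  apply is_derive_C_parts; unfold Cexp; cbn; (eapply is_derive_Rvalue;
    [apply is_derive_Rmult; [apply (is_derive_comp exp); [apply is_derive_exp | exact Hr] |] |]).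
  - apply (is_derive_comp cos); [apply is_derive_cos | exact Hi].
  - unfold scal; cbn; unfold mult; cbn. destruct dP; cbn; ring.
  - apply (is_derive_comp sin); [apply is_derive_sin | exact Hi].
  - unfold scal; cbn; unfold mult; cbn. destruct dP; cbn; ring.
Qed.

(* A branch of [log w / 2] on the upper half-plane (it differs from the principal one by the
   constant [i pi / 4]). *)
Definition half_log (w : C) : C :=
  (/ 4 * ln (Re w ^ 2 + Im w ^ 2), - / 2 * atan (Re w / Im w)).

Lemma is_derive_half_log (h : R -> C) x dh :
  is_derive h x dh -> Im (h x) <> 0 ->
  is_derive (fun t => half_log (h t)) x (dh / (2 * h x))%C.
Proof.
  intros H Hn. pose proof (is_derive_Re _ _ _ H) as Hr. pose proof (is_derive_Im _ _ _ H) as Hi.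
  assert (Hpos : 0 < Re (h x) ^ 2 + Im (h x) ^ 2).
  { pose proof (pow2_ge_0 (Re (h x))). assert (0 < Im (h x) ^ 2) by (apply pow2_gt_0, Hn). lra. }
  apply is_derive_C_parts; eapply is_derive_Rvalue.
  - apply (is_derive_scal (fun t => ln (Re (h t) ^ 2 + Im (h t) ^ 2))).
    apply (is_derive_comp ln); [apply is_derive_ln, Hpos |].
    apply is_derive_Rplus; apply is_derive_pow; [exact Hr | exact Hi].
  - destruct dh as [d1 d2], (h x) as [p q]; cbn in Hn, Hpos |- *.
    unfold scal, Rsqr; cbn; unfold mult; cbn. field. repeat split; lra.
  - apply (is_derive_scal (fun t => atan (Re (h t) / Im (h t)))).
    apply (is_derive_comp atan); [apply is_derive_atan |].
    apply is_derive_Rdiv; [exact Hr | exact Hi | exact Hn].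
  - destruct dh as [d1 d2], (h x) as [p q]; cbn in Hn, Hpos |- *.
    unfold scal, Rsqr; cbn; unfold mult; cbn. field. repeat split; lra.
Qed.

Lemma is_derive_Ccomp (F : R -> C) (h : R -> R) x dF dh :
  is_derive F (h x) dF -> is_derive h x dh ->
  is_derive (fun t => F (h t)) x (RtoC dh * dF)%C.
Proof.
  intros HF Hh. eapply is_derive_Cvalue; [exact (is_derive_comp F h x dF dh HF Hh) |].
  destruct dF. unfold scal; cbn; unfold prod_scal, RtoC, Cmult; cbn.
  unfold scal; cbn; unfold mult; cbn. f_equal; ring.
Qed.

(** * The mean condition along a segment of spectral parameters *)

Lemma cos_plus_2PI x : cos (x + 2 * PI) = cos x.
Proof. rewrite cos_plus, cos_2PI, sin_2PI. ring. Qed.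

Definition wave_slope (g A u : R) : R := sqrt (2 * g * (A + cos u)).

Definition lambda_of (g A : R) (a : C) : C := Csqrt (RtoC (/ (2 * g)) * (a - RtoC A)).

Definition sqrt_sq_minus_1 (a : C) : C := (Csqrt (a - 1) * Csqrt (a + 1))%C.

(* For [c = sc c0] with [sc = +-1], [kap = - sc g lam sqrt_sq_minus_1 a] and
   [q u = c g lam + kap / (a + cos u)], this is [Re (q u) / |f'|] divided by [sc g]. *)
Definition mean_integrand (g A c0 : R) (a : C) (u : R) : R :=
  Re (lambda_of g A a * (RtoC c0 - sqrt_sq_minus_1 a / (a + RtoC (cos u))))%C
  / wave_slope g A u.

Definition segment (g A c0 t : R) : C := (t * (A + 1 + 2 * g), (1 - t) / c0).

Lemma wave_slope_pos g A u : 0 < g -> 1 < A -> 0 < wave_slope g A u.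
Proof. intros. apply sqrt_lt_R0. pose proof (COS_bound u). nra. Qed.

Lemma wave_slope_sqr g A u : 0 < g -> 1 < A ->
  wave_slope g A u * wave_slope g A u = 2 * g * (A + cos u).
Proof. intros. apply sqrt_sqrt. pose proof (COS_bound u). nra. Qed.

Lemma continuous_wave_slope g A u : continuous (wave_slope g A) u.
Proof.
  apply continuous_sqrt_comp, continuous_Rmult; [apply continuous_const |].
  apply continuous_Rplus; [apply continuous_const | apply continuous_cos].
Qed.

Lemma Re_mul_sub_div (l m v : C) (k : R) :
  Re (l * (RtoC k - m / v))%C =
  Re l * k - (Re (l * m) * Re v + Im (l * m) * Im v) / (Re v ^ 2 + Im v ^ 2).
Proof. destruct l, m, v. unfold Cdiv, Cinv, Cminus, Cplus, Copp, Cmult, Rdiv. cbn. ring. Qed.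

Lemma continuity_2d_pt_quotient (L Mr Mi Vr Vi P Q : R -> R) k u0 t0 :
  continuous L t0 -> continuous Mr t0 -> continuous Mi t0 ->
  continuous Vr t0 -> continuous Vi t0 -> continuous P u0 -> continuous Q u0 ->
  Q u0 <> 0 -> (Vr t0 + P u0) ^ 2 + Vi t0 ^ 2 <> 0 ->
  continuity_2d_pt (fun u t =>
    (L t * k - (Mr t * (Vr t + P u) + Mi t * Vi t) / ((Vr t + P u) ^ 2 + Vi t ^ 2)) / Q u)
    u0 t0.
Proof.
  intros HL HMr HMi HVr HVi HP HQ HQ0 HD.
  assert (Ct : forall X : R -> R, continuous X t0 -> continuity_2d_pt (fun _ t => X t) u0 t0).
  { intros X HX. apply (continuity_1d_2d_pt_comp X (fun _ t => t));
      [apply continuity_pt_filterlim, HX | apply continuity_2d_pt_id2]. }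
  assert (Cu : forall X : R -> R, continuous X u0 -> continuity_2d_pt (fun u _ => X u) u0 t0).
  { intros X HX. apply (continuity_1d_2d_pt_comp X (fun u _ => u));
      [apply continuity_pt_filterlim, HX | apply continuity_2d_pt_id1]. }
  assert (Cs : continuity_2d_pt (fun u t => Vr t + P u) u0 t0)
    by (apply continuity_2d_pt_plus; auto).
  unfold Rdiv. apply continuity_2d_pt_mult; [| apply continuity_2d_pt_inv; auto].
  apply continuity_2d_pt_minus; [apply continuity_2d_pt_mult; auto using continuity_2d_pt_const |].
  assert (CD : continuity_2d_pt (fun u t => (Vr t + P u) ^ 2 + Vi t ^ 2) u0 t0).
  { apply continuity_2d_pt_plus; cbn; repeat apply continuity_2d_pt_mult;
      auto using continuity_2d_pt_const. }
  apply continuity_2d_pt_mult; [| apply continuity_2d_pt_inv; auto].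
  apply continuity_2d_pt_plus; apply continuity_2d_pt_mult; auto.
Qed.

Lemma Ccontinuous_segment g A c0 t : c0 <> 0 -> Ccontinuous (segment g A c0) t.
Proof. intros Hc. split; apply continuous_of_ex_derive; unfold segment; cbn; auto_derive; auto. Qed.

Lemma continuity_2d_pt_mean_integrand g A c0 u0 t0 : 0 < g -> 1 < A -> 0 < c0 ->
  continuity_2d_pt (fun u t => mean_integrand g A c0 (segment g A c0 t) u) u0 t0.
Proof.
  intros Hg HA Hc.
  set (a := segment g A c0).
  assert (Ha : Ccontinuous a t0) by (apply Ccontinuous_segment; lra).
  assert (Hlam : Ccontinuous (fun t => lambda_of g A (a t)) t0).
  { apply Ccontinuous_Csqrt, Ccontinuous_mult; [apply Ccontinuous_const |].
    apply Ccontinuous_minus; [exact Ha | apply Ccontinuous_const]. }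
  assert (Hm : Ccontinuous (fun t => lambda_of g A (a t) * sqrt_sq_minus_1 (a t))%C t0).
  { apply Ccontinuous_mult; [exact Hlam |].
    apply Ccontinuous_mult; apply Ccontinuous_Csqrt;
      [apply Ccontinuous_minus | apply Ccontinuous_plus]; auto using Ccontinuous_const. }
  apply continuity_2d_pt_ext with (f := fun u t =>
    (Re (lambda_of g A (a t)) * c0
     - (Re (lambda_of g A (a t) * sqrt_sq_minus_1 (a t))%C * (Re (a t) + cos u)
        + Im (lambda_of g A (a t) * sqrt_sq_minus_1 (a t))%C * Im (a t))
       / ((Re (a t) + cos u) ^ 2 + Im (a t) ^ 2)) / wave_slope g A u).
  { intros u t. unfold mean_integrand. rewrite Re_mul_sub_div, Re_plus_RtoC, Im_plus_RtoC.
    reflexivity. }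
  destruct Ha, Hlam, Hm.
  apply continuity_2d_pt_quotient; auto using continuous_cos, continuous_wave_slope.
  - apply Rgt_not_eq, wave_slope_pos; assumption.
  - unfold a, segment; cbn. destruct (Req_dec t0 1) as [-> | Ht].
    + pose proof (COS_bound u0). apply Rgt_not_eq. nra.
    + assert (Hi : (1 - t0) / c0 <> 0)
        by (unfold Rdiv; apply Rmult_integral_contrapositive; split;
            [lra | apply Rinv_neq_0_compat; lra]).
      apply Rgt_not_eq. pose proof (pow2_gt_0 _ Hi). pose proof (pow2_ge_0 (t0 * (A + 1 + 2 * g) + cos u0)).
      lra.
Qed.

Lemma segment_end g A c0 : segment g A c0 1 = RtoC (A + 1 + 2 * g).
Proof.
  unfold segment, RtoC. f_equal; [ring |]. unfold Rdiv. rewrite Rminus_eq_0. apply Rmult_0_l.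
Qed.

Lemma mean_integrand_end_pos g A c0 u : 0 < g -> 1 < A -> 0 < c0 -> c0 * c0 = 1 + / g ->
  0 < mean_integrand g A c0 (segment g A c0 1) u.
Proof.
  intros Hg HA Hc Hc0.
  set (M := A + 1 + 2 * g).
  assert (HY : M - 1 <= M + cos u) by (pose proof (COS_bound u); lra).
  assert (Hg2 : 0 < / (2 * g)) by (apply Rinv_0_lt_compat; lra).
  unfold mean_integrand, lambda_of, sqrt_sq_minus_1. rewrite segment_end. fold M.
  rewrite <- !RtoC_minus, <- RtoC_plus, <- RtoC_mult, <- RtoC_plus.
  rewrite !Csqrt_RtoC by (try apply Rmult_le_pos; unfold M; lra).
  rewrite <- RtoC_mult, <- RtoC_div, <- RtoC_minus, <- RtoC_mult by (unfold M in *; lra).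
  cbn [Re RtoC fst]. set (Y := M + cos u) in *. clearbody Y.
  assert (HM : 2 < M) by (unfold M; lra).
  apply Rdiv_lt_0_compat; [| apply wave_slope_pos; assumption].
  apply Rmult_lt_0_compat; [apply sqrt_lt_R0, Rmult_lt_0_compat; unfold M; lra |].
  rewrite <- sqrt_mult by (unfold M; lra).
  apply Rlt_0_minus, (Rmult_lt_reg_r Y); [lra |].
  unfold Rdiv. rewrite Rmult_assoc, Rinv_l, Rmult_1_r by lra.
  (* c0^2 (M - 1) = (1 + 1/g) (A + 2g) = M + 1 + A/g *)
  assert (Hgap : (M + 1) * (M - 1) < c0 * c0 * ((M - 1) * (M - 1))).
  { rewrite Hc0. unfold M.
    assert (0 < / g * (A + 2 * g) - 2) by
      (rewrite Rmult_plus_distr_l; replace (/ g * (2 * g)) with 2 by (field; lra);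
       pose proof (Rinv_0_lt_compat g Hg); nra).
    nra. }
  assert (HYsq : c0 * c0 * ((M - 1) * (M - 1)) <= c0 * c0 * (Y * Y))
    by (apply Rmult_le_compat_l; nra).
  apply Rsqr_incrst_0; [| apply sqrt_pos | apply Rmult_le_pos; lra].
  unfold Rsqr. rewrite sqrt_sqrt by nra. nra.
Qed.

(* Multiplying by [W1 + W2] turns [W1 - W2] into [(W1^2 - W2^2) / (W1 + W2) = 4 g C / (W1 + W2)],
   which no longer involves square roots. *)
Lemma antipodal_numerator_neg (x y R c0 g A C T W1 W2 : R) :
  0 < g -> 0 < y -> 0 < R -> 0 < x * c0 -> 0 < W1 -> 0 < W2 ->
  W1 * W1 = 2 * g * (A + C) -> W2 * W2 = 2 * g * (A - C) ->
  T < x * c0 * (C * C) -> 2 * A * x * c0 < R * y ->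
  (T + y * R * C) * W2 + (T - y * R * C) * W1 < 0.
Proof.
  intros Hg Hy HR Hxc HW1p HW2p HW1 HW2 HT Hxy.
  assert (E : ((T + y * R * C) * W2 + (T - y * R * C) * W1) * (W1 + W2)
              = T * ((W1 + W2) * (W1 + W2)) - 4 * g * y * R * (C * C)).
  { replace (((T + y * R * C) * W2 + (T - y * R * C) * W1) * (W1 + W2))
      with (T * ((W1 + W2) * (W1 + W2)) - y * R * C * (W1 * W1 - W2 * W2)) by ring.
    rewrite HW1, HW2. ring. }
  assert (HS : (W1 + W2) * (W1 + W2) <= 8 * g * A) by nra.
  assert (HS0 : 0 < (W1 + W2) * (W1 + W2)) by nra.
  assert (HC : 0 <= C * C) by nra.
  assert (Hlt : T * ((W1 + W2) * (W1 + W2)) < 4 * g * y * R * (C * C)).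
  { destruct (Rle_lt_dec T 0) as [HT0 | HT0].
    - destruct (Req_dec (C * C) 0) as [HC0 | HC0].
      + rewrite HC0 in HT |- *. nra.
      + assert (0 < C * C) by (destruct HC as [| HC2]; [assumption | now symmetry in HC2]).
        assert (0 < 4 * g * y * R * (C * C))
          by (apply Rmult_lt_0_compat; [repeat apply Rmult_lt_0_compat |]; lra).
        nra.
    - assert (T * ((W1 + W2) * (W1 + W2)) <= x * c0 * (C * C) * (8 * g * A)).
      { apply Rle_trans with (x * c0 * (C * C) * ((W1 + W2) * (W1 + W2))); [nra |].
        apply Rmult_le_compat_l; [nra | exact HS]. }
      assert (0 < C * C) by nra.
      assert (x * c0 * (C * C) * (8 * g * A) < 4 * g * y * R * (C * C)).
      { replace (x * c0 * (C * C) * (8 * g * A)) with (4 * g * (C * C) * (2 * A * x * c0)) by ring.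
        replace (4 * g * y * R * (C * C)) with (4 * g * (C * C) * (R * y)) by ring.
        apply Rmult_lt_compat_l; [nra | exact Hxy]. }
      lra. }
  nra.
Qed.

Lemma antipodal_sum_neg (x y R b c0 g A C W1 W2 : R) :
  0 < g -> 0 < A -> c0 * b = 1 -> 0 < b -> 1 < R -> 0 < x -> 0 < y ->
  x * x - y * y = - A / (2 * g) -> 2 * x * y = b / (2 * g) ->
  W1 * W1 = 2 * g * (A + C) -> W2 * W2 = 2 * g * (A - C) -> 0 < W1 -> 0 < W2 ->
  let F C W := (x * c0 - (- (y * R) * C + x * R * b) / (C ^ 2 + b ^ 2)) / W in
  F C W1 + F (- C) W2 < 0.
Proof.
  intros Hg HA Hcb Hb HR Hx Hy Hre Him HW1 HW2 HW1p HW2p F. unfold F.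
  replace ((- C) ^ 2) with (C ^ 2) by ring. replace (- (y * R) * - C) with (y * R * C) by ring.
  assert (Hxc : 0 < x * c0)
    by (apply Rmult_lt_0_compat; [lra | destruct (Rle_lt_dec c0 0); nra]).
  set (D := C ^ 2 + b ^ 2).
  assert (HD : 0 < D) by (unfold D; pose proof (pow2_ge_0 C); pose proof (pow2_gt_0 b); lra).
  set (T := x * (c0 * D - R * b)).
  assert (HT : T < x * c0 * (C * C)).
  { assert (c0 * D - R * b = c0 * (C * C) + b * (1 - R)).
    { unfold D. replace (c0 * (C ^ 2 + b ^ 2)) with (c0 * (C * C) + (c0 * b) * b) by ring.
      rewrite Hcb. ring. }
    unfold T. rewrite H. assert (b * (1 - R) < 0) by nra. nra. }
  assert (Hxy : 2 * A * x * c0 < R * y).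
  { assert (E : 2 * A * x * c0 * y = A / (2 * g)).
    { replace (2 * A * x * c0 * y) with (A * c0 * (2 * x * y)) by ring.
      rewrite Him. replace (A * c0 * (b / (2 * g))) with (A * (c0 * b) / (2 * g)) by (field; lra).
      rewrite Hcb. field. lra. }
    assert (A / (2 * g) < y * y).
    { assert (- A / (2 * g) = - (A / (2 * g))) by (field; lra).
      assert (0 < x * x) by nra. lra. }
    apply (Rmult_lt_reg_r y); nra. }
  match goal with |- ?L < 0 =>
    replace L with (((T + y * R * C) * W2 + (T - y * R * C) * W1) / (D * W1 * W2))
      by (unfold T; field; repeat split; lra) end.
  apply Rdiv_neg_pos; [apply (antipodal_numerator_neg x y R c0 g A C); auto; lra |].
  repeat apply Rmult_lt_0_compat; lra.
Qed.

Lemma sqrt_sq_minus_1_imaginary (b : R) : 0 < b ->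
  exists R, sqrt_sq_minus_1 (0, b) = (0, R) /\ R * R = 1 + b * b /\ 0 < R.
Proof.
  intros Hb. unfold sqrt_sq_minus_1.
  set (p := Csqrt ((0, b) - 1)). set (q := Csqrt ((0, b) + 1)).
  assert (Hp : (p * p = (0, b) - 1)%C) by (apply Csqrt_sqr; cbn; lra).
  assert (Hq : (q * q = (0, b) + 1)%C) by (apply Csqrt_sqr; cbn; lra).
  assert (Hpr : 0 < Re p) by (apply Re_Csqrt_pos; cbn; lra).
  assert (Hpi : 0 < Im p) by (apply Im_Csqrt_pos; cbn; lra).
  assert (Hqr : 0 < Re q) by (apply Re_Csqrt_pos; cbn; lra).
  assert (Hqi : 0 < Im q) by (apply Im_Csqrt_pos; cbn; lra).
  assert (Hsq : ((p * q) * (p * q))%C = RtoC (- (1 + b * b))).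
  { replace ((p * q) * (p * q))%C with ((p * p) * (q * q))%C by ring.
    rewrite Hp, Hq. unfold RtoC, Cminus, Cplus, Copp, Cmult. cbn. f_equal; ring. }
  assert (HIm : 0 < Im (p * q)%C).
  { change (0 < Re p * Im q + Im p * Re q). nra. }
  clearbody p q. destruct (p * q)%C as [r i]. cbn in HIm.
  assert (Hre := f_equal Re Hsq). assert (Him := f_equal Im Hsq). cbn in Hre, Him.
  assert (Hr : r = 0) by nra. subst r.
  exists i. repeat split; [lra | exact HIm].
Qed.

Lemma segment_start g A c0 : c0 <> 0 -> segment g A c0 0 = (0, / c0).
Proof. intros Hc. unfold segment. f_equal; [ring | field; exact Hc]. Qed.

Lemma mean_integrand_start_antipodal g A c0 u : 0 < g -> 1 < A -> 0 < c0 ->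
  mean_integrand g A c0 (segment g A c0 0) u +
  mean_integrand g A c0 (segment g A c0 0) (u + PI) < 0.
Proof.
  intros Hg HA Hc.
  set (b := / c0).
  assert (Hb : 0 < b) by (apply Rinv_0_lt_compat, Hc).
  assert (Hcb : c0 * b = 1) by (unfold b; field; lra).
  destruct (sqrt_sq_minus_1_imaginary b Hb) as [R [Hs [HR HR0]]].
  set (lam := lambda_of g A (0, b)).
  assert (Hw : 0 < Im (RtoC (/ (2 * g)) * ((0, b) - RtoC A))%C).
  { cbn. assert (0 < / (2 * g)) by (apply Rinv_0_lt_compat; lra). nra. }
  assert (Hlam := Csqrt_sqr _ (Rlt_le _ _ Hw)). fold (lambda_of g A (0, b)) in Hlam. fold lam in Hlam.
  assert (Hx : 0 < Re lam) by (apply Re_Csqrt_pos, Hw).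
  assert (Hy : 0 < Im lam) by (apply Im_Csqrt_pos, Hw).
  assert (Hterm : forall v, mean_integrand g A c0 (0, b) v =
    (Re lam * c0 - (- (Im lam * R) * cos v + Re lam * R * b) / (cos v ^ 2 + b ^ 2))
    / wave_slope g A v).
  { intros v. unfold mean_integrand. fold lam. rewrite Re_mul_sub_div, Re_plus_RtoC, Im_plus_RtoC.
    rewrite Hs. destruct lam as [x y]. cbn. f_equal. f_equal.
    f_equal; ring. }
  rewrite segment_start by lra. fold b. rewrite !Hterm, neg_cos.
  destruct lam as [x y]. cbn in Hx, Hy |- *.
  assert (Hre := f_equal Re Hlam). assert (Him := f_equal Im Hlam). cbn in Hre, Him.
  apply (antipodal_sum_neg x y R b c0 g A (cos u)); try lra.
  - destruct (Rle_lt_dec R 1); [| assumption]. assert (0 < b * b) by nra. nra.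
  - apply wave_slope_sqr; lra.
  - rewrite wave_slope_sqr, neg_cos by lra. ring.
  - apply wave_slope_pos; lra.
  - apply wave_slope_pos; lra.
Qed.

Lemma mean_integrand_periodic g A c0 a u :
  mean_integrand g A c0 a (u + 2 * PI) = mean_integrand g A c0 a u.
Proof.
  unfold mean_integrand, wave_slope.
  rewrite cos_plus_2PI. reflexivity.
Qed.

Lemma mean_integrand_root g A c0 : 0 < g -> 1 < A -> 0 < c0 -> c0 * c0 = 1 + / g ->
  exists t, 0 < t < 1 /\ RInt (mean_integrand g A c0 (segment g A c0 t)) 0 (2 * PI) = 0.
Proof.
  intros Hg HA Hc Hc0.
  pose proof PI_RGT_0 as Hpi.
  set (F := fun u t => mean_integrand g A c0 (segment g A c0 t) u).
  assert (HF2 : forall u t, continuity_2d_pt F u t)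
    by (intros; apply continuity_2d_pt_mean_integrand; assumption).
  assert (HF : forall t u, continuous (fun u => F u t) u)
    by (intros; apply continuity_2d_pt_continuous_l, HF2).
  set (h := fun t => RInt (fun u => F u t) 0 (2 * PI)).
  assert (H1 : 0 < h 1).
  { apply RInt_gt_0; [lra | | intros; apply HF]. intros; apply mean_integrand_end_pos; assumption. }
  assert (H0 : h 0 < 0).
  { assert (Hshift : forall u, continuous (fun u => F (u + PI) 0) u).
    { intros u. apply (continuous_comp (fun u => u + PI) (fun u => F u 0)); [| apply HF].
      apply continuous_Rplus; [apply continuous_id | apply continuous_const]. }
    assert (E : RInt (fun u => F u 0 + F (u + PI) 0) 0 (2 * PI) = 2 * h 0).
    { rewrite (RInt_plus (V := R_CompleteNormedModule)); try (apply ex_RInt_continuous_R; auto).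
      unfold plus; simpl.
      rewrite (RInt_period_translate (fun u => F u 0)); [unfold h; ring | apply HF |].
      intros; apply mean_integrand_periodic. }
    assert (RInt (fun u => F u 0 + F (u + PI) 0) 0 (2 * PI) < RInt (fun _ => 0) 0 (2 * PI)).
    { apply RInt_lt; [lra | intros; apply continuous_const | |].
      - intros; apply continuous_Rplus; auto.
      - intros; apply mean_integrand_start_antipodal; assumption. }
    rewrite RInt_const in H. unfold scal in H; simpl in H; unfold mult in H; simpl in H. lra. }
  destruct (Ranalysis5.IVT_interv h 0 1) as [t [Ht Hht]]; try lra.
  { intros; apply continuity_RInt_param; [lra | exact HF2]. }
  exists t. split; [| exact Hht].
  destruct (Req_dec t 0) as [-> | Ht0]; [lra |].
  destruct (Req_dec t 1) as [-> | Ht1]; [lra | lra].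
Qed.

(** * The eigenfunction *)

Lemma riccati_identity (a lam kap c g A S Co F1 F2 dPsi ddPsi : C) :
  g <> 0%C -> (c * c * g = 1 + g)%C -> (F2 = - g * S)%C ->
  (F1 * F1 = 2 * g * (A + Co))%C -> (S * S = 1 - Co * Co)%C ->
  (2 * g * (lam * lam) = a - A)%C -> (kap * kap = g * g * (lam * lam) * (a * a - 1))%C ->
  (a + Co)%C <> 0%C -> dPsi = (- S * F1)%C -> ddPsi = (- (Co * (F1 * F1) + S * F2))%C ->
  let Psi := (a + Co)%C in
  let phi := (c * g * lam + (kap + dPsi / 2) / Psi)%C in
  let dphi := (ddPsi / 2 / Psi - (kap + dPsi / 2) * dPsi / (Psi * Psi))%C in
  (dphi + phi * phi - 2 * c * g * lam * phi + g * (lam * lam + Co))%C = 0%C.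
Proof.
  intros Hg Hc HF2 HF1 HS Hlam Hkap HPsi HdPsi HddPsi Psi phi dphi.
  assert (Hlam' : (lam * lam = (a - A) / (2 * g))%C).
  { rewrite <- Hlam. field. exact Hg. }
  (* over the common denominator [4 Psi^2] the numerator vanishes identically once
     [F1^2], [F2], [S^2], [lam^2] and [kap^2] are eliminated *)
  assert (E : (dphi + phi * phi - 2 * c * g * lam * phi + g * (lam * lam + Co) =
    (2 * Psi * ddPsi - (S * S) * (F1 * F1) + 4 * (kap * kap)
     + 4 * Psi * Psi * (g * Co + g * (lam * lam) - (c * c * g) * g * (lam * lam)))
    / (4 * Psi * Psi))%C).
  { unfold phi, dphi. rewrite HdPsi. field. exact HPsi. }
  rewrite E. unfold Psi. rewrite HddPsi, HF2.
  replace (S * (- g * S))%C with (- g * (S * S))%C by ring.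
  rewrite Hkap, Hc, HS, HF1, Hlam'.
  field. repeat split; auto.
Qed.

Section Eigenfunction.

Variables (c A sg : R) (f : R -> R) (a lam kap : C).

Let g := gamma c.

Definition phase_density (u : R) : C := (RtoC c * RtoC g * lam + kap / (a + RtoC (cos u)))%C.

Definition phase_primitive (x : R) : C :=
  (RInt (fun u => Re (phase_density u) / wave_slope g A u) 0 x,
   RInt (fun u => Im (phase_density u) / wave_slope g A u) 0 x).

Definition Psi (z : R) : C := (a + RtoC (cos (f z)))%C.

Definition dPsi (z : R) : C := RtoC (- (sin (f z) * Derive f z)).

Definition ddPsi (z : R) : C :=
  RtoC (- (cos (f z) * (Derive f z * Derive f z) + sin (f z) * Derive (Derive f) z)).

(* The eigenfunction is [Cexp (phase z)]: [phase' = phi] and [phi] solves the Riccati form of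
   the eigenvalue equation. *)
Definition phase (z : R) : C := (half_log (Psi z) + RtoC sg * phase_primitive (f z))%C.

Definition phi (z : R) : C := (RtoC c * RtoC g * lam + (kap + dPsi z / 2) / Psi z)%C.

Definition dphi (z : R) : C :=
  (ddPsi z / 2 / Psi z - (kap + dPsi z / 2) * dPsi z / (Psi z * Psi z))%C.

Hypothesis c_gt1 : 1 < c ^ 2.
Hypothesis A_gt1 : 1 < A.
Hypothesis a_upper : 0 < Im a.
Hypothesis sg_sqr : sg * sg = 1.
Hypothesis f_derivable : forall z, ex_derive f z.
Hypothesis f'_derivable : forall z, ex_derive (Derive f) z.
Hypothesis f'_eq : forall z, Derive f z = sg * wave_slope g A (f z).
Hypothesis f''_eq : forall z, Derive (Derive f) z = - g * sin (f z).
Hypothesis lam_sqr : (2 * RtoC g * (lam * lam) = a - RtoC A)%C.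
Hypothesis kap_sqr : (kap * kap = RtoC g * RtoC g * (lam * lam) * (a * a - 1))%C.
Hypothesis mean_zero :
  RInt (fun u => Re (phase_density u) / wave_slope g A u) 0 (2 * PI) = 0.

Lemma gamma_pos : 0 < g.
Proof. unfold g, gamma. apply Rinv_0_lt_compat. lra. Qed.

Lemma gamma_c_sqr : c * c * g = 1 + g.
Proof. unfold g, gamma. simpl in c_gt1. field. lra. Qed.

Lemma Psi_neq0 z : Psi z <> 0%C.
Proof. intros E. apply (f_equal Im) in E. unfold Psi in E. rewrite Im_plus_RtoC in E. cbn in E. lra. Qed.

Lemma derive_f z : is_derive f z (Derive f z).
Proof. apply Derive_correct, f_derivable. Qed.

Lemma derive_f' z : is_derive (Derive f) z (Derive (Derive f) z).
Proof. apply Derive_correct, f'_derivable. Qed.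

Lemma is_derive_Psi z : is_derive Psi z (dPsi z).
Proof.
  eapply is_derive_Cvalue.
  - apply is_derive_Cplus; [apply is_derive_Cconst |].
    apply is_derive_RtoC, (is_derive_comp cos); [apply is_derive_cos | apply derive_f].
  - unfold dPsi. rewrite <- RtoC_plus. f_equal. unfold scal; cbn; unfold mult; cbn. ring.
Qed.

Lemma is_derive_dPsi z : is_derive dPsi z (ddPsi z).
Proof.
  apply is_derive_RtoC. eapply is_derive_Rvalue.
  - apply (is_derive_opp (fun t => sin (f t) * Derive f t)), is_derive_Rmult;
      [apply (is_derive_comp sin); [apply is_derive_sin | apply derive_f] | apply derive_f'].
  - unfold opp, scal; cbn; unfold mult; cbn. ring.
Qed.

Lemma is_derive_phi z : is_derive phi z (dphi z).
Proof.
  eapply is_derive_Cvalue.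
  - apply is_derive_Cplus; [apply is_derive_Cconst |]. unfold Cdiv.
    apply is_derive_Cmult; [apply is_derive_Cplus; [apply is_derive_Cconst |] |].
    + apply is_derive_Cmult; [apply is_derive_dPsi | apply is_derive_Cconst].
    + apply is_derive_Cinv; [apply is_derive_Psi | apply Psi_neq0].
  - unfold dphi. field. apply Psi_neq0.
Qed.

Lemma ex_derive_wave_slope u : ex_derive (wave_slope g A) u.
Proof.
  unfold wave_slope. auto_derive.
  pose proof gamma_pos. pose proof (COS_bound u). fold g. nra.
Qed.

Lemma is_derive_phase_density u : exists d, is_derive phase_density u d.
Proof.
  eexists. apply is_derive_Cplus; [apply is_derive_Cconst |]. unfold Cdiv.
  apply is_derive_Cmult; [apply is_derive_Cconst |].
  apply is_derive_Cinv.
  - apply is_derive_Cplus; [apply is_derive_Cconst | apply is_derive_RtoC, is_derive_cos].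
  - intros E. apply (f_equal Im) in E. rewrite Im_plus_RtoC in E. cbn in E. lra.
Qed.

Lemma continuous_phase_density_parts u :
  continuous (fun u => Re (phase_density u) / wave_slope g A u) u /\
  continuous (fun u => Im (phase_density u) / wave_slope g A u) u.
Proof.
  destruct (is_derive_phase_density u) as [d Hd].
  destruct (ex_derive_wave_slope u) as [dW HW].
  pose proof (wave_slope_pos g A u gamma_pos A_gt1) as HWpos.
  split; apply continuous_of_ex_derive; eexists; apply is_derive_Rdiv; try exact HW;
    try lra; [apply is_derive_Re | apply is_derive_Im]; exact Hd.
Qed.

Lemma is_derive_phase_primitive x :
  is_derive phase_primitive x (phase_density x / RtoC (wave_slope g A x))%C.
Proof.
  pose proof (wave_slope_pos g A x gamma_pos A_gt1) as HW.
  set (kr := fun u => Re (phase_density u) / wave_slope g A u).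
  set (ki := fun u => Im (phase_density u) / wave_slope g A u).
  assert (Hkr : forall u, continuous kr u) by (intros u; exact (proj1 (continuous_phase_density_parts u))).
  assert (Hki : forall u, continuous ki u) by (intros u; exact (proj2 (continuous_phase_density_parts u))).
  assert (Hex : forall k y, (forall u, continuous k u) -> is_RInt k 0 y (RInt k 0 y))
    by (intros; apply (RInt_correct (V := R_CompleteNormedModule)), ex_RInt_continuous_R; auto).
  unfold phase_primitive. fold kr ki.
  eapply is_derive_Cvalue.
  - apply (is_derive_Cpair (fun x => RInt kr 0 x) (fun x => RInt ki 0 x)).
    + apply (is_derive_RInt kr (RInt kr 0) 0 x); [| apply Hkr].
      apply filter_forall; intros; apply Hex, Hkr.
    + apply (is_derive_RInt ki (RInt ki 0) 0 x); [| apply Hki].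
      apply filter_forall; intros; apply Hex, Hki.
  - unfold kr, ki. destruct (phase_density x) as [p q]. unfold Cdiv, Cinv, Cmult, RtoC. cbn.
    f_equal; field; lra.
Qed.

Lemma phase_primitive_Re_bounded : exists B, forall x, Rabs (Re (phase_primitive x)) <= B.
Proof.
  set (k := fun u => Re (phase_density u) / wave_slope g A u).
  assert (Hk : forall u, continuous k u)
    by (intros u; exact (proj1 (continuous_phase_density_parts u))).
  assert (Hkper : forall u, k (u + 2 * PI) = k u).
  { intros u. unfold k, phase_density, wave_slope. rewrite cos_plus_2PI. reflexivity. }
  apply (periodic_bounded (fun x => Re (phase_primitive x)) (2 * PI)).
  - intros x. apply continuous_of_ex_derive. eexists.
    apply is_derive_Re, is_derive_phase_primitive.
  - intros x. change (RInt k 0 (x + 2 * PI) = RInt k 0 x).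
    rewrite <- (RInt_Chasles_R k 0 x (x + 2 * PI) Hk), RInt_period_shift by auto.
    unfold k. rewrite mean_zero. apply Rplus_0_r.
  - pose proof PI_RGT_0. lra.
Qed.

Lemma is_derive_phase z : is_derive phase z (phi z).
Proof.
  pose proof (wave_slope_pos g A (f z) gamma_pos A_gt1) as HW.
  eapply is_derive_Cvalue.
  - apply is_derive_Cplus.
    + apply is_derive_half_log; [apply is_derive_Psi |].
      unfold Psi. rewrite Im_plus_RtoC. lra.
    + apply is_derive_Cmult; [apply is_derive_Cconst |].
      apply is_derive_Ccomp; [apply is_derive_phase_primitive | apply derive_f].
  - rewrite f'_eq. unfold phi, phase_density.
    assert (Hsg : (RtoC sg * RtoC sg = 1)%C) by (rewrite <- RtoC_mult, sg_sqr; reflexivity).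
    rewrite RtoC_mult.
    replace (RtoC sg * (RtoC sg * RtoC (wave_slope g A (f z)) *
               ((RtoC c * RtoC g * lam + kap / (a + RtoC (cos (f z)))) /
                RtoC (wave_slope g A (f z)))))%C
      with ((RtoC sg * RtoC sg) * (RtoC c * RtoC g * lam + kap / (a + RtoC (cos (f z)))))%C.
    + rewrite Hsg. fold (Psi z). field. apply Psi_neq0.
    + field. split; [apply Psi_neq0 | intros E; apply RtoC_inj in E; lra].
Qed.

Lemma phase_Re_bounded : exists B, forall z, Re (phase z) <= B.
Proof.
  destruct phase_primitive_Re_bounded as [B HB].
  exists (/ 4 * ln ((Rabs (Re a) + 1) ^ 2 + Im a ^ 2) + B). intros z.
  unfold phase, half_log. cbn [Re Cplus Cmult RtoC fst snd].
  apply Rplus_le_compat.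
  - apply Rmult_le_compat_l; [lra |]. apply ln_le.
    + pose proof (pow2_ge_0 (Re (Psi z))). pose proof (pow2_gt_0 (Im (Psi z))).
      unfold Psi in *. rewrite Im_plus_RtoC in *. lra.
    + unfold Psi. rewrite Re_plus_RtoC, Im_plus_RtoC.
      apply Rplus_le_compat_r. rewrite <- (pow2_abs (Re a + cos (f z))).
      apply pow_incr. split; [apply Rabs_pos |].
      pose proof (COS_bound (f z)). apply Rabs_le. pose proof (Rle_abs (Re a)).
      pose proof (Rle_abs (- Re a)). rewrite Rabs_Ropp in *. lra.
  - specialize (HB (f z)). unfold Re in *. pose proof (Rle_abs (fst (phase_primitive (f z)))).
    pose proof (Rle_abs (- fst (phase_primitive (f z)))). rewrite Rabs_Ropp in *.
    assert (sg = 1 \/ sg = -1) as [-> | ->] by (destruct (Rle_lt_dec 0 sg); [left | right]; nra);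
      lra.
Qed.

Lemma derive_f_sqr z : Derive f z * Derive f z = 2 * g * (A + cos (f z)).
Proof.
  rewrite f'_eq. replace (sg * wave_slope g A (f z) * (sg * wave_slope g A (f z)))
    with ((sg * sg) * (wave_slope g A (f z) * wave_slope g A (f z))) by ring.
  rewrite sg_sqr, wave_slope_sqr by (apply gamma_pos || exact A_gt1). ring.
Qed.

Lemma riccati_phi z :
  (dphi z + phi z * phi z - 2 * RtoC c * RtoC g * lam * phi z
   + RtoC g * (lam * lam + RtoC (cos (f z))))%C = 0%C.
Proof.
  pose proof gamma_pos as Hg.
  apply (riccati_identity a lam kap (RtoC c) (RtoC g) (RtoC A) (RtoC (sin (f z)))
           (RtoC (cos (f z))) (RtoC (Derive f z)) (RtoC (Derive (Derive f) z)));
    [| | | | | exact lam_sqr | exact kap_sqr | apply Psi_neq0 | |];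
    try (unfold dPsi, ddPsi, RtoC; apply injective_projections; cbn; try ring).
  - intros E. apply (f_equal Re) in E. cbn in E. lra.
  - rewrite <- gamma_c_sqr. ring.
  - rewrite f''_eq. ring.
  - rewrite derive_f_sqr. ring.
  - pose proof (sin2_cos2 (f z)) as H. unfold Rsqr in H. lra.
Qed.

Lemma in_sigma_P_of_mean_zero : in_sigma_P c f lam.
Proof.
  destruct phase_Re_bounded as [B HB].
  exists (fun z => Cexp (phase z)), (fun z => phi z * Cexp (phase z))%C,
    (fun z => dphi z * Cexp (phase z) + phi z * (phi z * Cexp (phase z)))%C.
  split; [| split; [| split; [| split]]].
  - intros z. apply is_derive_Cexp, is_derive_phase.
  - intros z. apply is_derive_Cmult; [apply is_derive_phi | apply is_derive_Cexp, is_derive_phase].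
  - intros z. fold g. rewrite <- (Cmult_0_l (Cexp (phase z))), <- (riccati_phi z). ring.
  - exists (exp B). intros z. rewrite Cmod_Cexp.
    destruct (HB z) as [H | ->]; [apply Rlt_le, exp_increasing, H | apply Rle_refl].
  - exists 0. intros E. apply (f_equal Cmod) in E. rewrite Cmod_Cexp, Cmod_0 in E.
    pose proof (exp_pos (Re (phase 0))). lra.
Qed.

End Eigenfunction.

(** * The rotational wave *)

Lemma lambda_of_sqr g A a : 0 < g -> 0 <= Im a ->
  (2 * RtoC g * (lambda_of g A a * lambda_of g A a) = a - RtoC A)%C.
Proof.
  intros Hg Ha. unfold lambda_of. rewrite Csqrt_sqr.
  - rewrite RtoC_inv, RtoC_mult by lra. field.
    intros E. apply RtoC_inj in E. lra.
  - unfold Im in Ha. cbn. assert (0 < / (2 * g)) by (apply Rinv_0_lt_compat; lra). nra.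
Qed.

Lemma Re_lambda_of_pos g A a : 0 < g -> 0 < Im a -> 0 < Re (lambda_of g A a).
Proof.
  intros Hg Ha. apply Re_Csqrt_pos. unfold Im in Ha. cbn.
  assert (0 < / (2 * g)) by (apply Rinv_0_lt_compat; lra). nra.
Qed.

Lemma sqrt_sq_minus_1_sqr a : 0 <= Im a ->
  (sqrt_sq_minus_1 a * sqrt_sq_minus_1 a = a * a - 1)%C.
Proof.
  intros Ha. unfold sqrt_sq_minus_1.
  replace (Csqrt (a - 1) * Csqrt (a + 1) * (Csqrt (a - 1) * Csqrt (a + 1)))%C
    with ((Csqrt (a - 1) * Csqrt (a - 1)) * (Csqrt (a + 1) * Csqrt (a + 1)))%C by ring.
  unfold Im in Ha. rewrite !Csqrt_sqr by (cbn; lra). ring.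
Qed.

Lemma energy_derive_sqr c f E z : 1 < c ^ 2 -> wave_energy c f E ->
  Derive f z * Derive f z = 2 * gamma c * (E - 1 + cos (f z)).
Proof.
  intros Hc Hen. rewrite <- (Hen z). unfold gamma. field. lra.
Qed.

Lemma wave_derive2 c f z : 1 < c ^ 2 -> traveling_wave c f ->
  Derive (Derive f) z = - gamma c * sin (f z).
Proof.
  intros Hc [_ [_ Hode]]. specialize (Hode z).
  change (Derive_n f 2 z) with (Derive (Derive f) z) in Hode.
  unfold gamma. apply (Rmult_eq_reg_l (c ^ 2 - 1)); [| lra].
  replace ((c ^ 2 - 1) * (- / (c ^ 2 - 1) * sin (f z))) with (- sin (f z)) by (field; lra).
  lra.
Qed.

Lemma derive_signed_slope (f : R -> R) g A : 0 < g -> 1 < A ->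
  (forall z, ex_derive (Derive f) z) ->
  (forall z, Derive f z * Derive f z = 2 * g * (A + cos (f z))) ->
  exists sg, sg * sg = 1 /\ forall z, Derive f z = sg * wave_slope g A (f z).
Proof.
  intros Hg HA Hf2 Hsq.
  assert (Hne : forall z, Derive f z <> 0).
  { intros z E. specialize (Hsq z). rewrite E in Hsq. pose proof (COS_bound (f z)). nra. }
  assert (Habs : forall z, Rabs (Derive f z) = wave_slope g A (f z)).
  { intros z. unfold wave_slope. rewrite <- Hsq, <- sqrt_Rsqr_abs. reflexivity. }
  destruct (continuous_nonvanishing_sign (Derive f)) as [Hpos | Hneg];
    [intros; apply continuous_of_ex_derive, Hf2 | exact Hne | exists 1 | exists (-1)];
    (split; [ring | intros z; rewrite <- Habs]).
  - rewrite Rabs_pos_eq by (apply Rlt_le, Hpos). ring.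
  - rewrite Rabs_left by apply Hneg. ring.
Qed.

Lemma phase_density_mean_integrand c A c0 sc a u : 0 < Im a -> c = sc * c0 ->
  let lam := lambda_of (gamma c) A a in
  Re (phase_density c a lam (RtoC (- (sc * gamma c)) * (lam * sqrt_sq_minus_1 a)) u)
    / wave_slope (gamma c) A u
  = sc * gamma c * mean_integrand (gamma c) A c0 a u.
Proof.
  intros Ha Hc lam. unfold phase_density, mean_integrand. fold lam.
  assert (Hne : (a + RtoC (cos u))%C <> 0%C).
  { intros E. apply (f_equal Im) in E. rewrite Im_plus_RtoC in E. cbn in E. lra. }
  replace (RtoC c * RtoC (gamma c) * lam
           + RtoC (- (sc * gamma c)) * (lam * sqrt_sq_minus_1 a) / (a + RtoC (cos u)))%C
    with (RtoC (sc * gamma c) * (lam * (RtoC c0 - sqrt_sq_minus_1 a / (a + RtoC (cos u)))))%C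
    by (rewrite Hc, !RtoC_mult, RtoC_opp, RtoC_mult; field; exact Hne).
  set (w := (lam * _)%C). unfold Rdiv. destruct w. cbn. ring.
Qed.

Lemma kappa_sqr g lam sc a : sc * sc = 1 -> 0 <= Im a ->
  let kap := (RtoC (- (sc * g)) * (lam * sqrt_sq_minus_1 a))%C in
  (kap * kap = RtoC g * RtoC g * (lam * lam) * (a * a - 1))%C.
Proof.
  intros Hsc Ha kap. unfold kap.
  replace (RtoC (- (sc * g)) * (lam * sqrt_sq_minus_1 a) *
           (RtoC (- (sc * g)) * (lam * sqrt_sq_minus_1 a)))%C
    with (RtoC (sc * sc) * RtoC g * RtoC g * (lam * lam)
          * (sqrt_sq_minus_1 a * sqrt_sq_minus_1 a))%C
    by (rewrite !RtoC_mult, RtoC_opp, RtoC_mult; ring).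
  rewrite Hsc, sqrt_sq_minus_1_sqr by exact Ha. ring.
Qed.

Lemma phase_density_mean_zero c A c0 sc t : 1 < c ^ 2 -> 1 < A -> 0 < c0 -> 0 < t < 1 ->
  c = sc * c0 ->
  RInt (mean_integrand (gamma c) A c0 (segment (gamma c) A c0 t)) 0 (2 * PI) = 0 ->
  let a := segment (gamma c) A c0 t in
  let lam := lambda_of (gamma c) A a in
  RInt (fun u => Re (phase_density c a lam (RtoC (- (sc * gamma c)) * (lam * sqrt_sq_minus_1 a)) u)
                 / wave_slope (gamma c) A u) 0 (2 * PI) = 0.
Proof.
  intros Hc HA Hc0 Ht Hcsc Hroot a lam.
  assert (Hg : 0 < gamma c) by (unfold gamma; apply Rinv_0_lt_compat; lra).
  rewrite (RInt_ext _ (fun u => sc * gamma c * mean_integrand (gamma c) A c0 a u))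
    by (intros; apply phase_density_mean_integrand; [apply Rdiv_lt_0_compat; lra | exact Hcsc]).
  rewrite (RInt_scal (V := R_CompleteNormedModule)).
  - change (scal (sc * gamma c) (RInt (mean_integrand (gamma c) A c0 a) 0 (2 * PI)) = 0).
    unfold a. rewrite Hroot. apply Rmult_0_r.
  - apply ex_RInt_continuous_R. intros u.
    apply (continuity_2d_pt_continuous_l
             (fun u t => mean_integrand (gamma c) A c0 (segment (gamma c) A c0 t) u)).
    apply continuity_2d_pt_mean_integrand; assumption.
Qed.

Lemma Rabs_sign (x : R) : x <> 0 -> exists s, s * s = 1 /\ x = s * Rabs x.
Proof.
  intros Hx. destruct (Rle_lt_dec 0 x) as [Hp | Hn].
  - exists 1. rewrite Rabs_pos_eq by exact Hp. split; ring.
  - exists (-1). rewrite Rabs_left by exact Hn. split; ring.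
Qed.

Lemma Rabs_sqr_gamma c : 1 < c ^ 2 -> Rabs c * Rabs c = 1 + / gamma c.
Proof.
  intros Hc. unfold gamma. rewrite <- Rabs_mult, Rabs_pos_eq, Rinv_inv by nra. simpl. ring.
Qed.

Theorem lemma4p3 (c : R) (f : R -> R) :
  1 < c ^ 2 -> rotational_wave c f ->
  exists lam : C, in_sigma_P c f lam /\ 0 < Re lam.
Proof.
  intros Hc [Hwave [E [Hen HE]]].
  assert (Hg : 0 < gamma c) by (unfold gamma; apply Rinv_0_lt_compat; lra).
  assert (HA : 1 < E - 1) by lra.
  assert (Hc0 : 0 < Rabs c) by (apply Rabs_pos_lt; intros ->; simpl in Hc; lra).
  destruct (Rabs_sign c) as [sc [Hsc Hcsc]]; [intros ->; simpl in Hc; lra |].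
  destruct (derive_signed_slope f (gamma c) (E - 1) Hg HA (proj1 (proj2 Hwave))
              (fun z => energy_derive_sqr c f E z Hc Hen)) as [sg [Hsg Hf']].
  destruct (mean_integrand_root (gamma c) (E - 1) (Rabs c) Hg HA Hc0 (Rabs_sqr_gamma c Hc))
    as [t [Ht Hroot]].
  set (a := segment (gamma c) (E - 1) (Rabs c) t).
  assert (Ha : 0 < Im a) by (apply Rdiv_lt_0_compat; lra).
  exists (lambda_of (gamma c) (E - 1) a). split; [| apply Re_lambda_of_pos; assumption].
  apply (in_sigma_P_of_mean_zero c (E - 1) sg f a _
           (RtoC (- (sc * gamma c)) * (lambda_of (gamma c) (E - 1) a * sqrt_sq_minus_1 a)));
    try assumption; try apply Hwave.
  - intros z. apply wave_derive2; assumption.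
  - apply lambda_of_sqr; lra.
  - apply kappa_sqr; lra.
  - apply phase_density_mean_zero; assumption.
Qed.
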